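(* For any single unit-demand buyer with value distribution $\mathcal{D}$ over $m$ items and any production cost vector $c\in\mathbb{R}_+^m$, $$\textsc{BuyManyProfit}_{2c}(\mathcal{D})\leq 2\ln(4m)\,\textsc{SProfit}_{c}(\mathcal{D}).$$
   Context: Unit-demand buyer: valuation $v$ with $v_j\ge0$ per item, $v(S)=\max_{j\in S}v_j$; $\mathcal{D}$ arbitrary (correlated across items). Lotteries $\lambda\in\Delta_m=\{\lambda\in[0,1]^m:\sum_j\lambda_j\le1\}$, $v(\lambda)=\sum_jv_j\lambda_j$. A pricing function $p$ assigns a price $p(\lambda)\ge0$ to every lottery; buyer $v$ chooses $\lambda_{v,p}\in\arg\max_\lambda(v(\lambda)-p(\lambda))$ and pays $p(\lambda_{v,p})$. $p$ is buy-many if no buyer type can get higher utility by adaptively purchasing a (random) sequence of lotteries (each depending on previous outcomes), receiving the union of allocated items and paying the sum of prices, than by buying a single lottery. An item pricing is a vector $(q_1,\dots,q_m)\in\mathbb{R}_+^m$, i.e. $q(\lambda)=\sum_jq_j\lambda_j$. Given production costs $c$, the profit of pricing $p$ is $\textsc{Profit}_{p,c}(\mathcal{D})=\mathbb{E}_{v\sim\mathcal{D}}[p(\lambda_{v,p})-c\cdot\lambda_{v,p}]$; $\textsc{SProfit}_c(\mathcal{D})$ is the maximum profit over item pricings, and $\textsc{BuyManyProfit}_c(\mathcal{D})$ the maximum profit over buy-many pricings. *)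

From HB Require Import structures.
From mathcomp Require Import all_boot all_order all_algebra.
From mathcomp Require Import all_classical all_reals all_analysis.
Set Implicit Arguments. Unset Strict Implicit. Unset Printing Implicit Defensive.
Import Order.TTheory GRing.Theory Num.Theory.
Local Open Scope ring_scope.
Local Open Scope classical_set_scope.

Section BuyMany.
Variables (R : realType) (m : nat).

(* A lottery over the m items: lam j = probability of receiving item j. *)
Definition lottery := 'I_m -> R.

Definition is_lottery (lam : lottery) : Prop :=
  (forall j, 0 <= lam j <= 1) /\ \sum_(j < m) lam j <= 1.

Definition lot_value (v : 'I_m -> R) (lam : lottery) : R :=
  \sum_(j < m) v j * lam j.

Definition set_value (v : 'I_m -> R) (S : {set 'I_m}) : R :=
  \big[Num.max/0]_(j in S) v j.

(* An adaptive (finite-horizon) purchasing strategy: stop, or buy a lottery and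
   continue depending on its outcome (Some j = item j allocated, None = nothing). *)
Inductive strategy : Type :=
| Stop : strategy
| Buy : lottery -> (option 'I_m -> strategy) -> strategy.

Fixpoint valid_strategy (s : strategy) : Prop :=
  match s with
  | Stop => True
  | Buy lam k => is_lottery lam /\ forall o, valid_strategy (k o)
  end.

(* Expected utility (value of union of allocated items minus total payment)
   of strategy s for buyer v facing pricing p, having already obtained S. *)
Fixpoint strat_utility (v : 'I_m -> R) (p : lottery -> R) (S : {set 'I_m})
    (s : strategy) : R :=
  match s with
  | Stop => set_value v S
  | Buy lam k =>
      - p lam
      + \sum_(j < m) lam j * strat_utility v p (j |: S) (k (Some j))
      + (1 - \sum_(j < m) lam j) * strat_utility v p S (k None)
  end.

Definition nonneg_vec (v : 'I_m -> R) : Prop := forall j, 0 <= v j.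

Definition pricing (p : lottery -> R) : Prop :=
  forall lam, is_lottery lam -> 0 <= p lam.

(* Buy-many: no buyer type gains by an adaptive sequence of purchases compared
   to (the supremum of utilities of) buying a single lottery. *)
Definition buy_many (p : lottery -> R) : Prop :=
  pricing p /\
  forall v : 'I_m -> R, nonneg_vec v ->
  forall s : strategy, valid_strategy s ->
  forall eps : R, 0 < eps ->
  exists2 lam, is_lottery lam &
    strat_utility v p (finset.set0 : {set 'I_m}) s - eps < lot_value v lam - p lam.

Definition item_pricing (q : 'I_m -> R) : lottery -> R := lot_value q.

Definition optimal_choice (p : lottery -> R) (v : 'I_m -> R) (lam : lottery) : Prop :=
  is_lottery lam /\
  forall mu, is_lottery mu -> lot_value v mu - p mu <= lot_value v lam - p lam.

Section Profit.
Variables (d : measure_display) (T : measurableType d) (P : probability T R)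
  (val : T -> 'I_m -> R).

Definition profit_integrand (p : lottery -> R) (c : 'I_m -> R) (sel : T -> lottery)
    (t : T) : R :=
  p (sel t) - lot_value c (sel t).

Definition admissible (p : lottery -> R) (c : 'I_m -> R) (sel : T -> lottery) : Prop :=
  (forall t, optimal_choice p (val t) (sel t)) /\
  measurable_fun setT (profit_integrand p c sel).

Definition Profit (p : lottery -> R) (c : 'I_m -> R) (sel : T -> lottery) : \bar R :=
  (\int[P]_t (profit_integrand p c sel t)%:E)%E.

Definition SProfit (c : 'I_m -> R) : \bar R :=
  ereal_sup [set r | exists q sel, [/\ nonneg_vec q,
     admissible (item_pricing q) c sel & r = Profit (item_pricing q) c sel]].

Definition BuyManyProfit (c : 'I_m -> R) : \bar R :=
  ereal_sup [set r | exists p sel, [/\ buy_many p,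
     admissible p c sel & r = Profit p c sel]].
End Profit.
End BuyMany.

From HB Require Import structures.
From mathcomp Require Import all_boot all_order all_algebra.
From mathcomp Require Import all_classical all_reals all_analysis.
From mathcomp Require Import measurable_realfun lra ring.
Import Order.TTheory GRing.Theory Num.Theory numFieldNormedType.Exports.
Local Open Scope ring_scope.
Local Open Scope classical_set_scope.
Set Implicit Arguments. Unset Strict Implicit. Unset Printing Implicit Defensive.

(* Let [q j] be the least price per unit of probability of item [j] under the
   buy-many pricing [p].  A buyer can keep buying a lottery until [j] arrives, so
   buy-many forces every buyer's utility [U] to be at least [v j - q j], while the
   lottery [lam] he buys costs at least [lam j * q j] for every [j].
   Now offer the item prices [c + th_k q] with [th_k = (k + 2) / (4m)], for
   [k <= 4m - 2], and let [V_k] be the buyer's utility and [s_k] his choice at level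
   [k].  Raising [th] by [1/(4m)] lowers [V_k] by at most [q . s_k / (4m)], which is
   the profit of level [k] divided by [k + 2].  Telescoping from
   [V_0 >= v . lam - c . lam - p lam / 2] to [V_(4m-2) <= U] gives
   [p lam - 2 c . lam <= sum_k 2 / (k + 2) * profit_k]; integrate, and bound
   [sum_k 2 / (k + 2)] by [2 ln (4m)]. *)

Section Lotteries.
Variables (R : realType) (m : nat).
Implicit Types (x y u : 'I_m -> R) (mu : lottery R m).

Lemma lot_valueD x y mu :
  lot_value (fun j => x j + y j) mu = lot_value x mu + lot_value y mu.
Proof. by rewrite /lot_value -big_split; apply: eq_bigr => j _; rewrite mulrDl. Qed.

Lemma lot_valueB x y mu :
  lot_value (fun j => x j - y j) mu = lot_value x mu - lot_value y mu.
Proof. by rewrite /lot_value -sumrB; apply: eq_bigr => j _; rewrite mulrBl. Qed.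

Lemma lot_valueZ a x mu : lot_value (fun j => a * x j) mu = a * lot_value x mu.
Proof. by rewrite /lot_value mulr_sumr; apply: eq_bigr => j _; rewrite mulrA. Qed.

Lemma lottery_ge0 mu : is_lottery mu -> forall j, 0 <= mu j.
Proof. by case=> mu01 _ j; case/andP: (mu01 j). Qed.

Lemma lot_value_ge0 x mu :
  (forall j, 0 <= x j) -> is_lottery mu -> 0 <= lot_value x mu.
Proof.
by move=> x_ge0 /lottery_ge0 mu_ge0; apply: sumr_ge0 => j _; apply: mulr_ge0.
Qed.

Lemma lot_value_le x mu M :
  is_lottery mu -> 0 <= M -> (forall j, x j <= M) -> lot_value x mu <= M.
Proof.
move=> mu_lot M_ge0 x_le; have [_ mu_le1] := mu_lot.
apply: (@le_trans _ _ (\sum_(j < m) M * mu j)).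
  by apply: ler_sum => j _; rewrite ler_wpM2r ?(lottery_ge0 mu_lot).
by rewrite -mulr_sumr ler_piMr.
Qed.

Definition unit_lottery (j : 'I_m) : lottery R m := fun i => (i == j)%:R.

Lemma unit_lottery_lottery j : is_lottery (unit_lottery j).
Proof.
split=> [i|]; first by rewrite /unit_lottery; case: (i == j); rewrite ?lexx ?ler01.
by rewrite (bigD1 j) //= big1 ?addr0 /unit_lottery ?eqxx // => i /negbTE ->.
Qed.

(* [i] is the first maximiser of [u], provided [u i >= 0]: breaking ties by index
   makes it unique, and keeps it a measurable function of [u]. *)
Definition best_item u (i : 'I_m) : bool :=
  [&& 0 <= u i, all (fun k => u k <= u i) (enum 'I_m)
    & all (fun k => u k < u i) [seq k : 'I_m <- enum 'I_m | (k < i)%N]].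

Definition item_choice u : lottery R m := fun i => if best_item u i then 1 else 0.

Lemma best_itemP u i :
  reflect [/\ 0 <= u i, forall k, u k <= u i & forall k : 'I_m, (k < i)%N -> u k < u i]
          (best_item u i).
Proof.
apply: (iffP and3P) => [[u_ge0 /allP u_le /allP u_lt]|[u_ge0 u_le u_lt]].
  split=> // k; first by apply: u_le; rewrite mem_enum.
  by move=> ki; apply: u_lt; rewrite mem_filter ki mem_enum.
by split=> //; apply/allP => k //; rewrite mem_filter => /andP[/u_lt].
Qed.

Lemma best_item_uniq u i i' : best_item u i -> best_item u i' -> i = i'.
Proof.
move=> /best_itemP[_ le_i lt_i] /best_itemP[_ le_i' lt_i'].
case: (ltngtP i i') => [ii'|i'i|/val_inj //].
  by have := lt_i' _ ii'; rewrite ltNge le_i.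
by have := lt_i _ i'i; rewrite ltNge le_i'.
Qed.

Lemma best_item_exists u i0 : 0 <= u i0 -> exists i, best_item u i.
Proof.
move=> u_ge0.
have [imax _ imax_max] := @arg_maxP _ _ _ i0 xpredT u isT.
have u_le k : u k <= u imax by exact: imax_max.
have [i /eqP ui i_min] :=
  @arg_minnP _ imax (fun k => u k == u imax) (fun k => nat_of_ord k) (eqxx _).
exists i; apply/best_itemP; split=> [|k|k ki]; rewrite ui //.
  exact: le_trans u_ge0 (u_le i0).
rewrite lt_neqAle u_le andbT; apply/negP => /eqP uk.
by have := i_min k; rewrite uk eqxx leqNgt ki => /(_ isT).
Qed.

Lemma lot_value_item_choice u x i :
  best_item u i -> lot_value x (item_choice u) = x i.
Proof.
move=> best_i; rewrite /lot_value (bigD1 i) //= big1 ?addr0 /item_choice ?best_i ?mulr1 //.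
move=> k ki; case: ifP => [best_k|]; last by rewrite mulr0.
by move: ki; rewrite (best_item_uniq best_k best_i) eqxx.
Qed.

Lemma lot_value_item_choice0 u x :
  best_item u =1 xpred0 -> lot_value x (item_choice u) = 0.
Proof. by move=> nobest; rewrite /lot_value big1 // => k _; rewrite /item_choice nobest mulr0. Qed.

Lemma item_choice_lottery u : is_lottery (item_choice u).
Proof.
split=> [i|]; first by rewrite /item_choice; case: ifP; rewrite ?lexx ?ler01.
have -> : \sum_(i < m) item_choice u i = lot_value (fun=> 1) (item_choice u).
  by apply: eq_bigr => i _; rewrite mul1r.
by have [i /lot_value_item_choice -> | /lot_value_item_choice0 ->] := pickP (best_item u).
Qed.

Lemma item_choice_max u mu :
  is_lottery mu -> lot_value u mu <= lot_value u (item_choice u).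
Proof.
move=> mu_lot.
have [i best_i | nobest] := pickP (best_item u).
  have /best_itemP[u_ge0 u_le _] := best_i.
  by rewrite (lot_value_item_choice _ best_i); apply: lot_value_le.
rewrite lot_value_item_choice0 //; apply: lot_value_le => // k.
rewrite leNgt; apply/negP => /ltW /best_item_exists[i].
by rewrite nobest.
Qed.

Lemma item_choice_optimal w v :
  optimal_choice (item_pricing w) v (item_choice (fun j => v j - w j)).
Proof.
split=> [|mu mu_lot]; first exact: item_choice_lottery.
by rewrite /item_pricing -!lot_valueB; apply: item_choice_max.
Qed.

End Lotteries.

Section ItemChoiceMeasurable.
Variables (d : measure_display) (T : measurableType d) (R : realType) (m : nat).

Lemma measurable_all (I : Type) (s : seq I) (f : I -> T -> bool) :
  (forall k, measurable_fun setT (f k)) ->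
  measurable_fun setT (fun t => all (f^~ t) s).
Proof.
move=> f_meas; elim: s => [|k s IH] /=; first exact: measurable_cst.
exact: measurable_and.
Qed.

Lemma measurable_lot_value_item_choice (u : T -> 'I_m -> R) (x : 'I_m -> R) :
  (forall j, measurable_fun setT (u^~ j)) ->
  measurable_fun setT (fun t => lot_value x (item_choice (u t))).
Proof.
move=> u_meas; apply: measurable_sum => i.
apply: measurable_funM; first exact: measurable_cst.
apply: measurable_fun_ifT; try exact: measurable_cst.
apply: measurable_and.
  by apply: measurable_fun_ler => //; exact: measurable_cst.
apply: measurable_and; apply: measurable_all => k.
  exact: measurable_fun_ler.
exact: measurable_fun_ltr.
Qed.

End ItemChoiceMeasurable.

Section BuyManyUtility.
Variables (R : realType) (m : nat) (p : lottery R m -> R) (v : 'I_m -> R).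
Hypothesis v_ge0 : nonneg_vec v.

Lemma set_value0 : set_value v finset.set0 = 0.
Proof. by rewrite /set_value big_pred0 // => i; rewrite inE. Qed.

Lemma set_value_ge0 (S : {set 'I_m}) : 0 <= set_value v S.
Proof. by rewrite /set_value; elim/big_ind: _ => // x y x_ge0 y_ge0; rewrite le_max x_ge0. Qed.

Lemma set_value_ge (S : {set 'I_m}) j : j \in S -> v j <= set_value v S.
Proof. by move=> jS; rewrite /set_value (bigD1 j) //= le_max lexx. Qed.

Fixpoint buy_until (mu : lottery R m) (j : 'I_m) (N : nat) : strategy R m :=
  if N is N'.+1 then
    Buy mu (fun o => if o == Some j then @Stop R m else buy_until mu j N')
  else @Stop R m.

Lemma buy_until_valid mu j N : is_lottery mu -> valid_strategy (buy_until mu j N).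
Proof. by move=> mu_lot; elim: N => [|N IH] //=; split=> // o; case: ifP. Qed.

(* Each round costs [p mu] and delivers [j] with probability [mu j]; after [N] rounds
   [j] has been delivered with probability [1 - (1 - mu j) ^ N]. *)
Lemma buy_until_utility mu j N S :
  is_lottery mu -> 0 < mu j ->
  (v j - p mu / mu j) * (1 - (1 - mu j) ^+ N) <= strat_utility v p S (buy_until mu j N).
Proof.
move=> mu_lot muj_gt0; have mu_ge0 := lottery_ge0 mu_lot.
elim: N S => [|N IH] S /=; first by rewrite expr0 subrr mulr0 set_value_ge0.
set F := (v j - p mu / mu j) * (1 - (1 - mu j) ^+ N).
set total := \sum_(i < m) mu i.
have allocated : mu j * v j + (total - mu j) * F <=
    \sum_(i < m) mu i * strat_utility v p (i |: S)
      (if Some i == Some j then @Stop R m else buy_until mu j N).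
  rewrite [X in _ <= X](bigD1 j) //= eqxx /total (bigD1 j) //= addrAC subrr add0r.
  apply: lerD; first by rewrite ler_wpM2l // set_value_ge // setU11.
  rewrite mulr_suml; apply: ler_sum => i ij.
  have -> : (Some i == Some j) = false by apply/negbTE; apply: contra ij => /eqP[->].
  by rewrite ler_wpM2l.
have unallocated : (1 - total) * F <= (1 - total) * strat_utility v p S (buy_until mu j N).
  by rewrite ler_wpM2l // subr_ge0; case: mu_lot.
have -> : (v j - p mu / mu j) * (1 - (1 - mu j) ^+ N.+1) =
    - p mu + (mu j * v j + (total - mu j) * F) + (1 - total) * F.
  by rewrite /F exprS; field; exact: lt0r_neq0.
by rewrite lerD // lerD2l.
Qed.

Hypothesis p_buy_many : buy_many p.
Variable lam : lottery R m.
Hypothesis lam_opt : optimal_choice p v lam.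

Lemma buy_many_strat_utility_le s :
  valid_strategy s -> strat_utility v p finset.set0 s <= lot_value v lam - p lam.
Proof.
move=> s_valid; apply/ler_addgt0Pr => e e_gt0.
have [nu nu_lot] := p_buy_many.2 v v_ge0 s s_valid e e_gt0.
have := lam_opt.2 nu nu_lot; lra.
Qed.

Lemma buy_many_utility_ge0 : 0 <= lot_value v lam - p lam.
Proof. by have := @buy_many_strat_utility_le (@Stop R m) I; rewrite /= set_value0. Qed.

Lemma buy_many_price_ratio mu j :
  is_lottery mu -> 0 < mu j -> v j - p mu / mu j <= lot_value v lam - p lam.
Proof.
move=> mu_lot muj_gt0; have [mu01 _] := mu_lot.
set D := v j - p mu / mu j.
have D_lim : (fun N => D * (1 - (1 - mu j) ^+ N)) @ \oo --> D.
  rewrite -[X in _ --> X]mulr1; apply: cvgM; first exact: cvg_cst.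
  rewrite -[X in _ --> X]subr0; apply: cvgB; first exact: cvg_cst.
  apply: cvg_expr; case/andP: (mu01 j) => _ muj_le1.
  by rewrite ger0_norm ?subr_ge0 // ltrBlDr ltrDl.
apply: (closed_cvg (fun x => x <= lot_value v lam - p lam) _ _ _ D_lim).
  exact: closed_le.
apply: nearW => N; apply: le_trans (buy_many_strat_utility_le (buy_until_valid j N mu_lot)).
exact: buy_until_utility.
Qed.

End BuyManyUtility.

Section UnitPrice.
Variables (R : realType) (m : nat) (p : lottery R m -> R).
Hypothesis p_pricing : pricing p.

Definition unit_price (j : 'I_m) : R :=
  inf [set p mu / mu j | mu in [set mu | is_lottery mu /\ 0 < mu j]].

Let unit_price_set_n0 j :
  [set p mu / mu j | mu in [set mu | is_lottery mu /\ 0 < mu j]] !=set0.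
Proof.
exists (p (unit_lottery R j) / unit_lottery R j j); exists (unit_lottery R j) => //.
by split; [exact: unit_lottery_lottery | rewrite /unit_lottery eqxx ltr01].
Qed.

Let unit_price_set_lb j :
  lbound [set p mu / mu j | mu in [set mu | is_lottery mu /\ 0 < mu j]] 0.
Proof. by move=> _ [mu [mu_lot muj_gt0] <-]; rewrite divr_ge0 ?p_pricing ?ltW. Qed.

Lemma unit_price_ge0 j : 0 <= unit_price j.
Proof. exact: lb_le_inf. Qed.

Lemma unit_price_le mu j : is_lottery mu -> 0 < mu j -> unit_price j <= p mu / mu j.
Proof. by move=> mu_lot muj_gt0; apply: ge_inf; [exists 0 | exists mu]. Qed.

Lemma mul_unit_price_le lam j : is_lottery lam -> lam j * unit_price j <= p lam.
Proof.
move=> lam_lot; have [->|lamj_neq0] := eqVneq (lam j) 0; first by rewrite mul0r p_pricing.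
have lamj_gt0 : 0 < lam j by rewrite lt0r lamj_neq0 lottery_ge0.
by rewrite mulrC -ler_pdivlMr // unit_price_le.
Qed.

Lemma buy_many_unit_price v lam j :
  buy_many p -> nonneg_vec v -> optimal_choice p v lam ->
  v j - unit_price j <= lot_value v lam - p lam.
Proof.
move=> p_bm v_ge0 lam_opt; rewrite lerBlDr addrC -lerBlDr.
apply: lb_le_inf => // _ [mu [mu_lot muj_gt0] <-].
by rewrite lerBlDr addrC -lerBlDr buy_many_price_ratio.
Qed.

End UnitPrice.

Section ScaledItemPrices.
Variables (R : realType) (m : nat).

(* Level [k <= 4m - 2] charges the item prices [c + price_scale k * q]; the scale runs
   from [2 / (4m)] up to [1]. *)
Definition price_scale (k : nat) : R := k.+2%:R / (4 * m)%:R.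

Lemma price_scale_ge0 k : 0 <= price_scale k.
Proof. by rewrite divr_ge0. Qed.

Lemma price_scaleS k : price_scale k.+1 = price_scale k + (4 * m)%:R^-1.
Proof. by rewrite /price_scale mulrSr mulrDl mul1r. Qed.

Lemma price_scale_last : (0 < m)%N -> price_scale (4 * m - 2) = 1.
Proof.
move=> m_gt0; have m4 : (2 <= 4 * m)%N by rewrite (@leq_trans 4) ?leq_pmulr.
by rewrite /price_scale -addn2 subnK // divff // pnatr_eq0 -lt0n (leq_trans _ m4).
Qed.

Lemma price_scale0_mul_le : price_scale 0 * m%:R <= 2^-1.
Proof.
rewrite /price_scale; have [->|m_gt0] := posnP m; first by rewrite mulr0 invr_ge0.
rewrite natrM mulrAC -mulf_div divff ?pnatr_eq0 -?lt0n // mulr1.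
by rewrite -[4 : R]/((2 * 2)%:R) natrM invfM mulrA divff ?mul1r.
Qed.

Variables (v c q : 'I_m -> R) (lam : lottery R m) (price : R) (s : nat -> lottery R m).

Let scaled_utility k mu := lot_value (fun j => v j - (c j + price_scale k * q j)) mu.

Hypotheses (c_ge0 : forall j, 0 <= c j) (lam_lot : is_lottery lam) (price_ge0 : 0 <= price)
  (utility_ge0 : 0 <= lot_value v lam - price)
  (utility_ge : forall j, v j - q j <= lot_value v lam - price)
  (q_lam_le : forall j, lam j * q j <= price)
  (s_lot : forall k, is_lottery (s k))
  (s_opt : forall k mu, is_lottery mu -> scaled_utility k mu <= scaled_utility k (s k)).

Let scaled_utility_lin k mu :
  scaled_utility k mu = lot_value v mu - lot_value c mu - price_scale k * lot_value q mu.
Proof. by rewrite /scaled_utility lot_valueB lot_valueD lot_valueZ opprD addrA. Qed.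

Let first_utility_ge :
  lot_value v lam - lot_value c lam - price / 2 <= scaled_utility 0 (s 0).
Proof.
apply: le_trans (s_opt 0 lam_lot); rewrite scaled_utility_lin.
have q_lam_le_sum : lot_value q lam <= price *+ m.
  rewrite -[X in price *+ X](card_ord m) -sumr_const.
  by apply: ler_sum => j _; rewrite mulrC.
have : price_scale 0 * lot_value q lam <= price / 2.
  apply: (le_trans (ler_wpM2l (price_scale_ge0 0) q_lam_le_sum)).
  by rewrite -[price *+ m]mulr_natr mulrCA ler_wpM2l // price_scale0_mul_le.
lra.
Qed.

Let last_utility_le : scaled_utility (4 * m - 2) (s (4 * m - 2)) <= lot_value v lam - price.
Proof.
apply: lot_value_le => // j.
(* the index [j] witnesses [0 < m] *)
rewrite price_scale_last ?mul1r; last exact: leq_ltn_trans (leq0n j) (ltn_ord j).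
by have := utility_ge j; have := c_ge0 j; lra.
Qed.

(* The lottery [s k] is still on offer at level [k + 1]. *)
Let utility_step k :
  scaled_utility k (s k) - lot_value q (s k) / (4 * m)%:R <= scaled_utility k.+1 (s k.+1).
Proof.
have -> : scaled_utility k (s k) - lot_value q (s k) / (4 * m)%:R = scaled_utility k.+1 (s k).
  by rewrite !scaled_utility_lin price_scaleS; ring.
exact: s_opt.
Qed.

Lemma scaled_item_profits_bound :
  price - 2 * lot_value c lam <=
  \sum_(k < 4 * m - 2) 2 / k.+2%:R * (price_scale k * lot_value q (s k)).
Proof.
set K := (4 * m - 2)%N; set Z := fun k => lot_value q (s k) / (4 * m)%:R.
have telescoped : - \sum_(k < K) Z k <= scaled_utility K (s K) - scaled_utility 0 (s 0).
  rewrite -(telescope_sumr (fun k => scaled_utility k (s k)) (leq0n K)).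
  rewrite big_mkord -sumrN; apply: ler_sum => k _.
  by have := utility_step k; rewrite /Z; lra.
have -> : \sum_(k < K) 2 / k.+2%:R * (price_scale k * lot_value q (s k)) = 2 * \sum_(k < K) Z k.
  rewrite mulr_sumr; apply: eq_bigr => k _; rewrite /Z /price_scale.
  by rewrite !mulrA mulfVK ?pnatr_eq0 // mulrAC.
by move: telescoped first_utility_ge last_utility_le; lra.
Qed.

End ScaledItemPrices.

Lemma buy_many_profit_le (R : realType) (m : nat) (p : lottery R m -> R) (v c : 'I_m -> R)
    (lam : lottery R m) :
  buy_many p -> nonneg_vec v -> (forall j, 0 <= c j) -> optimal_choice p v lam ->
  p lam - lot_value (fun j => 2 * c j) lam <=
  \sum_(k < 4 * m - 2) 2 / k.+2%:R * (price_scale R m k * lot_value (unit_price p)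
     (item_choice (fun j => v j - (c j + price_scale R m k * unit_price p j)))).
Proof.
move=> p_bm v_ge0 c_ge0 lam_opt; have [lam_lot _] := lam_opt.
rewrite lot_valueZ; apply: (scaled_item_profits_bound
  (s := fun k => item_choice (fun j => v j - (c j + price_scale R m k * unit_price p j)))) => //.
- exact: p_bm.1.
- exact: buy_many_utility_ge0.
- by move=> j; apply: buy_many_unit_price.
- by move=> j; apply: mul_unit_price_le p_bm.1 _ _ lam_lot.
- by move=> k; apply: item_choice_lottery.
- by move=> k mu; apply: item_choice_max.
Qed.

(* [ln] is concave, so [1 / (k + 2) <= ln (k + 2) - ln (k + 1)]. *)
Lemma sum_inv_le_ln (R : realType) n : \sum_(k < n) (k.+2%:R : R)^-1 <= ln n.+1%:R.
Proof.
elim: n => [|n IH]; first by rewrite big_ord0 ln1.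
rewrite big_ord_recr /= -[ln _](subrK (ln (n.+1%:R : R))) addrC lerD //.
have n2_gt0 : (0 : R) < n.+2%:R by rewrite ltr0n.
have : ln (1 - (n.+2%:R : R)^-1) <= - (n.+2%:R)^-1.
  by apply: le_ln1Dx; rewrite ltrN2 invf_lt1 // ltr1n.
have -> : 1 - (n.+2%:R : R)^-1 = n.+1%:R / n.+2%:R.
  by rewrite -[n.+2]addn1 natrD; field; apply: lt0r_neq0; have := ler0n R n; lra.
by rewrite ln_div ?posrE ?ltr0n // lerNr opprB.
Qed.

Lemma sum_inv_le_ln4m (R : realType) m :
  \sum_(k < 4 * m - 2) (k.+2%:R : R)^-1 <= ln (4 * m%:R).
Proof.
case: m => [|m]; first by rewrite muln0 big_ord0 mulr0n mulr0 ln0.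
apply: le_trans (@sum_inv_le_ln R _) _.
by rewrite ler_ln ?posrE ?ltr0n ?mulr_gt0 // -natrM ler_nat ltn_subrL muln_gt0.
Qed.

Section WeightedIntegrals.
Variables (d : measure_display) (T : measurableType d) (R : realType).
Variable mu : {measure set T -> \bar R}.
Local Open Scope ereal_scope.

Lemma integral_le_nonneg_majorant (f g : T -> R) :
  measurable_fun setT f -> measurable_fun setT g ->
  (forall t, (0 <= g t)%R) -> (forall t, (f t <= g t)%R) ->
  \int[mu]_t (f t)%:E <= \int[mu]_t (g t)%:E.
Proof.
move=> f_meas g_meas g_ge0 f_le_g; rewrite integralE.
apply: le_trans (geeDl _ _) _.
  by rewrite oppe_le0; apply: integral_ge0 => t _; exact: funeneg_ge0.
apply: ge0_le_integral => //.
- by apply: measurable_funepos; exact/measurable_EFinP.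
- exact/measurable_EFinP.
- by move=> t _; rewrite funeposE ge_max !lee_fin f_le_g g_ge0.
Qed.

Lemma ge0_integral_weighted_sum n (a : nat -> R) (g : nat -> T -> R) :
  (forall k, (0 <= a k)%R) -> (forall k t, (0 <= g k t)%R) ->
  (forall k, measurable_fun setT (g k)) ->
  \int[mu]_t (\sum_(k < n) a k * g k t)%:E =
  \sum_(k < n) (a k)%:E * \int[mu]_t (g k t)%:E.
Proof.
move=> a_ge0 g_ge0 g_meas; under eq_integral do rewrite -sumEFin.
rewrite ge0_integral_sum //.
- apply: eq_bigr => k _; under eq_integral do rewrite EFinM.
  by rewrite ge0_integralZl_EFin //; [move=> t _; rewrite lee_fin | exact/measurable_EFinP].
- by move=> k; apply/measurable_EFinP; apply: measurable_funM => //; exact: measurable_cst.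
- by move=> k t _; rewrite lee_fin mulr_ge0.
Qed.

End WeightedIntegrals.

Lemma lee_sum_weighted (R : realDomainType) n (a : nat -> R) (x : nat -> \bar R) (S : \bar R) :
  (forall k, (0 <= a k)%R) -> (forall k, (x k <= S)%E) ->
  (\sum_(k < n) (a k)%:E * x k <= (\sum_(k < n) a k)%:E * S)%E.
Proof.
move=> a_ge0 x_le; rewrite -sumEFin ge0_sume_distrl; last by move=> k _; rewrite lee_fin.
by apply: lee_sum => k _; apply: lee_wpmul2l; rewrite ?lee_fin.
Qed.

Lemma item_choice_admissible (R : realType) (m : nat) (d : measure_display)
    (T : measurableType d) (val : T -> 'I_m -> R) (c w : 'I_m -> R) :
  (forall j, measurable_fun setT (fun t => val t j)) ->
  admissible val (item_pricing w) c (fun t => item_choice (fun j => val t j - w j)).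
Proof.
move=> val_meas; split=> [t|]; first exact: item_choice_optimal.
have u_meas j : measurable_fun setT (fun t => val t j - w j).
  by apply: measurable_funB => //; exact: measurable_cst.
by apply: measurable_funB; exact: measurable_lot_value_item_choice.
Qed.

Theorem theorem6 (R : realType) (m : nat) (d : measure_display)
  (T : measurableType d) (P : probability T R) (val : T -> 'I_m -> R)
  (c : 'I_m -> R) :
  (forall t j, 0 <= val t j) ->
  (forall j, measurable_fun setT (fun t => val t j)) ->
  (forall j, 0 <= c j) ->
  (BuyManyProfit P val (fun j => (2 * c j)%R)
     <= ((2 * ln (4 * m%:R))%R)%:E * SProfit P val c)%E.
Proof.
move=> val_ge0 val_meas c_ge0.
apply: ge_ereal_sup => _ [p [sel [p_bm [sel_opt profit_meas] ->]]].
have q_ge0 := unit_price_ge0 p_bm.1.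
pose w k j := c j + price_scale R m k * unit_price p j.
pose s k t := item_choice (fun j => val t j - w k j).
pose g k := profit_integrand (item_pricing (w k)) c (s k).
pose a k : R := 2 / k.+2%:R.
have a_ge0 k : 0 <= a k by rewrite divr_ge0.
have g_adm k : admissible val (item_pricing (w k)) c (s k) by exact: item_choice_admissible.
have g_scaled k t : g k t = price_scale R m k * lot_value (unit_price p) (s k t).
  by rewrite /g /profit_integrand /item_pricing lot_valueD lot_valueZ addrAC subrr add0r.
have g_ge0 k t : 0 <= g k t.
  by rewrite g_scaled mulr_ge0 ?price_scale_ge0 ?(lot_value_ge0 q_ge0 (item_choice_lottery _)).
have g_le k : (Profit P (item_pricing (w k)) c (s k) <= SProfit P val c)%E.
  apply: ereal_sup_ubound; exists (w k), (s k); split=> // j.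
  by rewrite /w addr_ge0 ?mulr_ge0 ?price_scale_ge0.
have S_ge0 : (0 <= SProfit P val c)%E.
  by apply: le_trans (g_le 0%N); apply: integral_ge0 => t _; rewrite lee_fin; exact: g_ge0.
apply: (@le_trans _ _ (\int[P]_t (\sum_(k < 4 * m - 2) a k * g k t)%:E)%E).
  apply: integral_le_nonneg_majorant => // [|t|t].
  - apply: measurable_sum => k; apply: measurable_funM; first exact: measurable_cst.
    exact: (g_adm k).2.
  - by apply: sumr_ge0 => k _; rewrite mulr_ge0.
  - under eq_bigr do rewrite g_scaled.
    exact: buy_many_profit_le (sel_opt t).
rewrite ge0_integral_weighted_sum // => [|k]; last exact: (g_adm k).2.
apply: le_trans (lee_sum_weighted _ a_ge0 g_le) _.
by rewrite lee_wpmul2r // lee_fin -mulr_sumr ler_wpM2l // sum_inv_le_ln4m.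
Qed.
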